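(* Let $(W,S)$ be a Coxeter system with $S$ finite, and let $\Bbbk$ be a commutative ring with no $2$-torsion. Let $(\mathfrak{h},\mathfrak{h}^*,\Delta^\vee,\Delta)$ be a realization of $(W,S)$ over $\Bbbk$, and suppose that its Cartan matrix $A=(a_{s,t})_{s,t\in S}$, $a_{s,t}=\langle \alpha_s^\vee,\alpha_t\rangle$, has determinant which is invertible in $\Bbbk$. Then $\Delta$ and $\Delta^\vee$ are each linearly independent. Moreover, as representations of $W$ one has $\mathfrak{h}\cong \Bbbk\cdot\Delta^\vee\oplus T$ for some trivial representation $T$ contained in the common kernel of all $\alpha_s$, $s\in S$; similarly $\mathfrak{h}^*\cong \Bbbk\cdot \Delta\oplus T^*$ for a trivial representation $T^*$ (contained in the common kernel of all $\alpha_s^\vee$).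
   Context: A (simple) realization of a Coxeter system $(W,S)$ over $\Bbbk$ is a free $\Bbbk$-module $\mathfrak{h}$ of finite rank together with subsets $\Delta^\vee=\{\alpha_s^\vee : s\in S\}\subset\mathfrak{h}$ (simple coroots) and $\Delta=\{\alpha_s : s\in S\}\subset \mathfrak{h}^*=\mathrm{Hom}_\Bbbk(\mathfrak{h},\Bbbk)$ (simple roots) such that $\langle\alpha_s^\vee,\alpha_s\rangle=2$ for all $s\in S$, and the assignment $s(v)=v-\langle v,\alpha_s\rangle\alpha_s^\vee$ for $v\in\mathfrak{h}$ defines a representation of $W$ on $\mathfrak{h}$. The contragredient action on $\mathfrak{h}^*$ is $s(f)=f-\langle\alpha_s^\vee,f\rangle\alpha_s$. Here $\Bbbk\cdot\Delta^\vee$ denotes the $\Bbbk$-span of $\Delta^\vee$, and similarly for $\Delta$. *)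

From HB Require Import structures.
From mathcomp Require Import all_boot all_order all_algebra.
Set Implicit Arguments. Unset Strict Implicit. Unset Printing Implicit Defensive.
Import GRing.Theory.
Local Open Scope ring_scope.

(* h = k^n (free k-module of rank n), h^* = Hom(h,k) identified with k^n via
   the dual basis; the pairing <v, f> is the standard one. *)
Definition pairing (k : comPzRingType) (n : nat) (v f : 'rV[k]_n) : k :=
  \sum_(i < n) v 0 i * f 0 i.

(* Coxeter matrix on a finite set S; m s t = 0 encodes m_{s,t} = infinity. *)
Definition coxeter_matrix (S : finType) (m : S -> S -> nat) : Prop :=
  (forall s, m s s = 1%N) /\ (forall s t, m s t = m t s) /\
  (forall s t, s != t -> m s t != 1%N).

Definition refl_h (k : comPzRingType) (n : nat) (S : finType)
  (cor rt : S -> 'rV[k]_n) (s : S) (v : 'rV[k]_n) : 'rV[k]_n :=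
  v - pairing v (rt s) *: cor s.

Definition refl_hd (k : comPzRingType) (n : nat) (S : finType)
  (cor rt : S -> 'rV[k]_n) (s : S) (f : 'rV[k]_n) : 'rV[k]_n :=
  f - pairing (cor s) f *: rt s.

(* Realization of the Coxeter system with Coxeter matrix m: <a_s^v, a_s> = 2
   and the assignment s |-> refl_h s respects the defining relations
   (st)^{m_st} = 1 (m_st finite) of the Coxeter group W, i.e. defines a
   representation of W on h. *)
Definition realization (k : comPzRingType) (n : nat) (S : finType)
  (m : S -> S -> nat) (cor rt : S -> 'rV[k]_n) : Prop :=
  (forall s, pairing (cor s) (rt s) = 2) /\
  (forall s t v, m s t != 0%N ->
     iter (m s t) (fun w => refl_h cor rt s (refl_h cor rt t w)) v = v).

Definition cartan (k : comPzRingType) (n : nat) (S : finType)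
  (cor rt : S -> 'rV[k]_n) : 'M[k]_#|S| :=
  \matrix_(i, j) pairing (cor (enum_val i)) (rt (enum_val j)).

Definition lin_indep (k : comPzRingType) (n : nat) (S : finType)
  (x : S -> 'rV[k]_n) : Prop :=
  forall c : S -> k, \sum_(s : S) c s *: x s = 0 -> forall s, c s = 0.

Definition in_span (k : comPzRingType) (n : nat) (S : finType)
  (x : S -> 'rV[k]_n) (v : 'rV[k]_n) : Prop :=
  exists c : S -> k, v = \sum_(s : S) c s *: x s.

Definition submodule (k : comPzRingType) (n : nat) (T : 'rV[k]_n -> Prop) : Prop :=
  T 0 /\ (forall u v, T u -> T v -> T (u + v)) /\ (forall a v, T v -> T (a *: v)).

Definition direct_sum_span (k : comPzRingType) (n : nat) (S : finType)
  (x : S -> 'rV[k]_n) (T : 'rV[k]_n -> Prop) : Prop :=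
  (forall v, exists a t, in_span x a /\ T t /\ v = a + t) /\
  (forall v, in_span x v -> T v -> v = 0).

From HB Require Import structures.
From mathcomp Require Import all_boot all_order all_algebra.
Set Implicit Arguments. Unset Strict Implicit. Unset Printing Implicit Defensive.
Import GRing.Theory.
Local Open Scope ring_scope.

(* Only the invertibility of the Cartan matrix A matters.  Pairing a combination
   sum_s c_s alpha_s^vee against the simple roots yields the row vector c A, so
   c A = 0 forces c = 0 (linear independence), and every v decomposes as
   sum_s c_s alpha_s^vee + (v - sum_s c_s alpha_s^vee) where c solves
   c A = (<v, alpha_t>)_t; the second summand lies in the common kernel T of the
   roots, on which every reflection acts trivially.  Since the Cartan matrix of
   the dual realization is A^T, the same argument applies to h^*. *)

Section InvertibleDeterminant.
Variables (k : comPzRingType) (p : nat) (G : 'M[k]_p) (d : k).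
Hypothesis detGd : \det G * d = 1.

Lemma mulmx_det_unit_adjK (b : 'rV[k]_p) : (d *: (b *m \adj G)) *m G = b.
Proof.
by rewrite -scalemxAl -mulmxA mul_adj_mx mul_mx_scalar scalerA mulrC detGd scale1r.
Qed.

Lemma mulmx_det_unit_eq0 (u : 'rV[k]_p) : u *m G = 0 -> u = 0.
Proof.
move=> uG0; have : u *m G *m \adj G = 0 by rewrite uG0 mul0mx.
rewrite -mulmxA mul_mx_adj mul_mx_scalar => uGadj0.
by rewrite -[u]scale1r -detGd mulrC -scalerA uGadj0 scaler0.
Qed.

End InvertibleDeterminant.

Section Pairing.
Variables (k : comPzRingType) (n : nat).

Lemma pairingC (v f : 'rV[k]_n) : pairing v f = pairing f v.
Proof. by apply: eq_bigr => i _; rewrite mulrC. Qed.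

Lemma pairing0l (f : 'rV[k]_n) : pairing 0 f = 0.
Proof. by rewrite /pairing big1 // => i _; rewrite mxE mul0r. Qed.

Lemma pairingDl (u v f : 'rV[k]_n) : pairing (u + v) f = pairing u f + pairing v f.
Proof. by rewrite /pairing -big_split; apply: eq_bigr => i _; rewrite !mxE mulrDl. Qed.

Lemma pairingBl (u v f : 'rV[k]_n) : pairing (u - v) f = pairing u f - pairing v f.
Proof. by rewrite /pairing -sumrB; apply: eq_bigr => i _; rewrite !mxE mulrBl. Qed.

Lemma pairingZl a (v f : 'rV[k]_n) : pairing (a *: v) f = a * pairing v f.
Proof. by rewrite /pairing mulr_sumr; apply: eq_bigr => i _; rewrite !mxE mulrA. Qed.

Lemma pairing_suml (S : finType) (c : S -> k) (x : S -> 'rV[k]_n) f :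
  pairing (\sum_s c s *: x s) f = \sum_s c s * pairing (x s) f.
Proof.
rewrite /pairing; under eq_bigr => i _ do rewrite summxE mulr_suml.
rewrite exchange_big; apply: eq_bigr => s _; rewrite mulr_sumr.
by apply: eq_bigr => i _; rewrite mxE mulrA.
Qed.

End Pairing.

Section CartanUnit.
Variables (k : comPzRingType) (n : nat) (S : finType) (x y : S -> 'rV[k]_n).

Definition coef_row (c : S -> k) : 'rV[k]_#|S| := \row_i c (enum_val i).

Definition annihilator (v : 'rV[k]_n) : Prop := forall t, pairing v (y t) = 0.

Lemma coef_row_mul_cartan (c : S -> k) t :
  (coef_row c *m cartan x y) 0 (enum_rank t) = pairing (\sum_s c s *: x s) (y t).
Proof.
rewrite pairing_suml !mxE (reindex (@enum_val S predT)) /=; last first.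
  by exists enum_rank => s _; [exact: enum_valK | exact: enum_rankK].
by apply: eq_bigr => i _; rewrite !mxE enum_rankK.
Qed.

Lemma cartan_transpose : cartan y x = (cartan x y)^T.
Proof. by apply/matrixP => i j; rewrite !mxE pairingC. Qed.

Lemma submodule_annihilator : submodule annihilator.
Proof.
split; first by move=> t; rewrite pairing0l.
split; first by move=> u v hu hv t; rewrite pairingDl hu hv addr0.
by move=> a v hv t; rewrite pairingZl hv mulr0.
Qed.

Lemma refl_h_annihilator s v : annihilator v -> refl_h x y s v = v.
Proof. by move=> hv; rewrite /refl_h hv scale0r subr0. Qed.

Lemma refl_hd_annihilator s v : annihilator v -> refl_hd y x s v = v.
Proof. by move=> hv; rewrite /refl_hd pairingC hv scale0r subr0. Qed.

Variable d : k.
Hypothesis det_cartan_d : \det (cartan x y) * d = 1.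

Lemma span_annihilator_eq0 (c : S -> k) :
  annihilator (\sum_s c s *: x s) -> forall s, c s = 0.
Proof.
move=> hc s.
have cA0 : coef_row c *m cartan x y = 0.
  by apply/rowP => j; rewrite -[j]enum_valK coef_row_mul_cartan hc mxE.
have /rowP/(_ (enum_rank s)) := mulmx_det_unit_eq0 det_cartan_d cA0.
by rewrite !mxE enum_rankK.
Qed.

Lemma lin_indep_cartan_unit : lin_indep x.
Proof. by move=> c hc; apply: span_annihilator_eq0 => t; rewrite hc pairing0l. Qed.

Lemma direct_sum_span_annihilator : direct_sum_span x annihilator.
Proof.
split=> [v | _ [c ->] /span_annihilator_eq0 c0]; last first.
  by rewrite big1 // => s _; rewrite c0 scale0r.
pose u := d *: (\row_i pairing v (y (enum_val i)) *m \adj (cartan x y)).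
pose c s := u 0 (enum_rank s).
have cA : coef_row c *m cartan x y = \row_i pairing v (y (enum_val i)).
  suff -> : coef_row c = u by exact: mulmx_det_unit_adjK.
  by apply/rowP => i; rewrite mxE /c enum_valK.
exists (\sum_s c s *: x s), (v - \sum_s c s *: x s).
split; first by exists c.
split; last by rewrite addrC subrK.
by move=> t; rewrite pairingBl -coef_row_mul_cartan cA mxE enum_rankK subrr.
Qed.

End CartanUnit.

Theorem mainTheorem1 (k : comPzRingType) (n : nat) (S : finType)
  (m : S -> S -> nat) (cor rt : S -> 'rV[k]_n) :
  coxeter_matrix m ->
  (forall x : k, x *+ 2 = 0 -> x = 0) ->
  realization m cor rt ->
  (exists d : k, \det (cartan cor rt) * d = 1) ->
  lin_indep rt /\ lin_indep cor /\
  (exists T : 'rV[k]_n -> Prop,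
     submodule T /\ direct_sum_span cor T /\
     (forall v s, T v -> pairing v (rt s) = 0) /\
     (forall v s, T v -> refl_h cor rt s v = v)) /\
  (exists Td : 'rV[k]_n -> Prop,
     submodule Td /\ direct_sum_span rt Td /\
     (forall f s, Td f -> pairing (cor s) f = 0) /\
     (forall f s, Td f -> refl_hd cor rt s f = f)).
Proof.
move=> _ _ _ [d detAd].
have detATd : \det (cartan rt cor) * d = 1 by rewrite cartan_transpose det_tr.
split; first exact: lin_indep_cartan_unit detATd.
split; first exact: lin_indep_cartan_unit detAd.
split.
  exists (annihilator rt); split; first exact: submodule_annihilator.
  split; first exact: direct_sum_span_annihilator detAd.
  by split=> [v s /(_ s) | v s /refl_h_annihilator].
exists (annihilator cor); split; first exact: submodule_annihilator.
split; first exact: direct_sum_span_annihilator detATd.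
by split=> [f s /(_ s) | f s /refl_hd_annihilator]; first rewrite pairingC.
Qed.
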